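(* If $G$ is an SSP group of length $5$ of $G(5,c)$-type, then $c\in\{4,5\}$; in particular there is no SSP group of $G(5,3)$-type.
   Context: Notation: $x^f$ is the image of $x$ under $f$; $[x,y]=x^{-1}y^{-1}xy$; $e$ is the identity. A triple $(G,H,f)$, where $H\le G$ and $f:H\to G$ is a homomorphism, is simple if the only subgroup $K\le H$ that is normal in $G$ and satisfies $K^f\le K$ is trivial. For such a triple put $G_0=G$, $H_0=H$, and for $k\ge1$, $G_k=(H_{k-1})^f$, $H_k=H\cap G_k$. Let $p$ be a prime or $\infty$. A polycyclic group $G$ is an SSP group with respect to $(G,H,f)$ if: (1) $f$ is injective; (2) each $(G_k,H_k,f|_{H_k})$ is a simple triple; (3) $H_k$ and $G_{k+1}$ are normal in $G_k$ and $G_k=H_kG_{k+1}$; (4) whenever $G_k$ is nontrivial, $G_k/H_k$ is cyclic of order $p$ (infinite cyclic if $p=\infty$). The length $n$ is the Hirsch length if $p=\infty$ and $\log_p|G|$ if $p$ is prime. A canonical basis of $G$ is a tuple $(a_1,\dots,a_n)$ with $a_1,\dots,a_{n-1}\in H$, $a_{i+1}=a_i^f$ for $1\le i\le n-1$, $G_i=\langle a_{i+1},\dots,a_n\rangle$ and $H_i=\langle a_{i+1},\dots,a_{n-1}\rangle$ for $0\le i\le n-1$. The cut-off point $c$ is the largest $s\in\{2,\dots,n\}$ with $[a_1,a_2]=\dots=[a_1,a_s]=e$; $G$ is then of $G(n,c)$-type. *)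

(* abstract (possibly infinite) groups via mathcomp's
   [groupType] (boot/monoid.v); subsets of a group are Prop-valued predicates. *)
From HB Require Import structures.
From mathcomp Require Import all_boot monoid.

Set Implicit Arguments.
Unset Strict Implicit.
Unset Printing Implicit Defensive.

Local Open Scope group_scope.

Section SSP.

Variable gT : groupType.

Definition gset := gT -> Prop.

Definition subset (A B : gset) : Prop := forall x, A x -> B x.
Definition set_eq (A B : gset) : Prop := forall x, A x <-> B x.
Definition setI (A B : gset) : gset := fun x => A x /\ B x.
Definition setM (A B : gset) : gset := fun z => exists x y, A x /\ B y /\ z = x * y.
Definition image (f : gT -> gT) (A : gset) : gset := fun y => exists x, A x /\ f x = y.
Definition trivial_set (A : gset) : Prop := forall x, A x -> x = 1.

Definition subgroup (S : gset) : Prop :=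
  S 1 /\ (forall x y, S x -> S y -> S (x * y)) /\ (forall x, S x -> S x^-1).

Definition normal_in (N G : gset) : Prop :=
  subgroup N /\ subgroup G /\ subset N G /\
  (forall g n, G g -> N n -> N (n ^ g)).

Definition generated (S : gset) : gset :=
  fun x => forall K, subgroup K -> subset S K -> K x.

Definition hom_on (H : gset) (f : gT -> gT) : Prop :=
  forall x y, H x -> H y -> f (x * y) = f x * f y.

Definition injective_on (H : gset) (f : gT -> gT) : Prop :=
  forall x y, H x -> H y -> f x = f y -> x = y.

Definition triple (G H : gset) (f : gT -> gT) : Prop :=
  subgroup G /\ subgroup H /\ subset H G /\ hom_on H f /\ subset (image f H) G.

Definition simple_triple (G H : gset) (f : gT -> gT) : Prop :=
  triple G H f /\
  forall K, subgroup K -> subset K H -> normal_in K G -> subset (image f K) K ->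
    trivial_set K.

Fixpoint GHseq (G H : gset) (f : gT -> gT) (k : nat) : gset * gset :=
  match k with
  | 0 => (G, H)
  | k'.+1 => let G' := image f (GHseq G H f k').2 in (G', setI H G')
  end.
Definition Gk G H f k := (GHseq G H f k).1.
Definition Hk G H f k := (GHseq G H f k).2.

(* the quotient G/N (N normal in G) is cyclic, generated by the coset of g:
   every x in G lies in some coset g^m N, m an integer *)
Definition quot_gen (G N : gset) (g : gT) : Prop :=
  G g /\ forall x, G x -> exists m : nat, N (g ^- m * x) \/ N (g ^+ m * x).

(* p : option nat; [Some q] is a prime q, [None] stands for p = infinity *)
Definition prime_or_inf (p : option nat) : Prop :=
  match p with Some q => prime q | None => True end.

Definition quot_cyclic_of_order (p : option nat) (G N : gset) : Prop :=
  exists g, quot_gen G N g /\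
    match p with
    | Some q => N (g ^+ q) /\ forall m, (0 < m < q)%N -> ~ N (g ^+ m)
    | None => forall m, (0 < m)%N -> ~ N (g ^+ m)
    end.

(* a subnormal series G = S 0 >= S 1 >= ... >= S m = 1 with cyclic factors;
   b i records whether the factor S i / S (i+1) is infinite *)
Definition cyclic_series (G : gset) (m : nat) (S : nat -> gset) (b : nat -> bool) : Prop :=
  set_eq (S 0) G /\ subgroup (S m) /\ trivial_set (S m) /\
  forall i, (i < m)%N ->
    normal_in (S i.+1) (S i) /\
    exists g, quot_gen (S i) (S i.+1) g /\
      (if b i then forall k, (0 < k)%N -> ~ S i.+1 (g ^+ k)
       else exists k, (0 < k)%N /\ S i.+1 (g ^+ k)).

Definition polycyclic (G : gset) : Prop :=
  exists m S b, cyclic_series G m S b.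

Definition hirsch_length (G : gset) (n : nat) : Prop :=
  exists m S b, cyclic_series G m S b /\ count b (iota 0 m) = n.

Definition finite_of_order (G : gset) (N : nat) : Prop :=
  exists s : seq gT, uniq s /\ (forall x, G x <-> x \in s) /\ size s = N.

Definition ssp_length (p : option nat) (G : gset) (n : nat) : Prop :=
  match p with
  | Some q => finite_of_order G (q ^ n)%N
  | None => hirsch_length G n
  end.

Definition SSP (p : option nat) (G H : gset) (f : gT -> gT) : Prop :=
  prime_or_inf p /\ polycyclic G /\
  injective_on H f /\
  forall k,
    simple_triple (Gk G H f k) (Hk G H f k) f /\
    normal_in (Hk G H f k) (Gk G H f k) /\
    normal_in (Gk G H f k.+1) (Gk G H f k) /\
    set_eq (Gk G H f k) (setM (Hk G H f k) (Gk G H f k.+1)) /\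
    (~ trivial_set (Gk G H f k) -> quot_cyclic_of_order p (Gk G H f k) (Hk G H f k)).

(* canonical basis (a 1, ..., a n) of G (indices outside 1..n are irrelevant) *)
Definition canonical_basis (G H : gset) (f : gT -> gT) (n : nat) (a : nat -> gT) : Prop :=
  (forall i, (1 <= i <= n.-1)%N -> H (a i)) /\
  (forall i, (1 <= i <= n.-1)%N -> a i.+1 = f (a i)) /\
  (forall i, (i <= n.-1)%N ->
     set_eq (Gk G H f i) (generated (fun x => exists j, (i.+1 <= j <= n)%N /\ x = a j)) /\
     set_eq (Hk G H f i) (generated (fun x => exists j, (i.+1 <= j <= n.-1)%N /\ x = a j))).

Definition is_cutoff (n : nat) (a : nat -> gT) (c : nat) : Prop :=
  (2 <= c <= n)%N /\
  (forall s, (2 <= s <= c)%N -> [~ a 1%N, a s] = 1) /\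
  ((c < n)%N -> [~ a 1%N, a c.+1] <> 1).

Definition of_Gnc_type (G H : gset) (f : gT -> gT) (n c : nat) : Prop :=
  exists a, canonical_basis G H f n a /\ is_cutoff n a c.

End SSP.

(* As f is injective
   on H, a relation among a 1, ..., a 4 holds iff its image under f does, and
   as G_4 = <a 5> is cyclic of prime or infinite order with H_4 = 1,
   a 5 ^ (j*j) = 1 forces a 5 ^ j = 1, hence a i ^ j = 1 for every i.
   If c = 2, then [a 3, a 5] lies in H /\ G_3 = H_3 = <a 4> (both H_2 and
   G_3 are normal in G_2), say it is a 4 ^ j; pulling back by f,
   [a 2, a 4] = a 3 ^ j.  Now a 3 is central in the normal subgroup H_1 of
   G_1, so a 2 commutes with [a 3, a 5] = a 4 ^ j, and
   a 3 ^ (j*j) = [a 2, a 4 ^ j] = 1.  Hence a 4 ^ j = 1, [a 2, a 4] = 1 and,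
   pulling back once more, [a 1, a 3] = 1, contradicting c = 2.  If c = 3, the
   same argument one level up writes [a 2, a 5] = a 3 ^ s * a 4 ^ t in H_2 and
   kills first t, then s, giving [a 1, a 4] = 1. *)

From Pilot Require Import Defs.
From HB Require Import structures.
From mathcomp Require Import all_boot monoid ssralg ssrint zify.

Set Implicit Arguments.
Unset Strict Implicit.
Unset Printing Implicit Defensive.

Local Open Scope group_scope.

Section IntegerPowers.
Variable gT : groupType.
Implicit Types x y b c : gT.

(* Integer powers; groupType only provides nat powers x ^+ n. *)
Definition expgz x (k : int) : gT :=
  match k with Posz n => x ^+ n | Negz n => x ^- n.+1 end.

Lemma expgzS x k : expgz x (k + 1)%R = expgz x k * x.
Proof.
case: k => [n|[|n]].
- have -> : (Posz n + 1)%R = Posz n.+1 by lia.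
  by rewrite /= expgSr.
- have -> : (Negz 0 + 1)%R = Posz 0 by lia.
  by rewrite /= expg1 mulVg.
have -> : (Negz n.+1 + 1)%R = Negz n by lia.
by rewrite /= [x ^+ n.+2]expgS invgM mulgVK.
Qed.

Lemma expgzD x m n : expgz x (m + n)%R = expgz x m * expgz x n.
Proof.
elim/int_rect: n => [|n IH|n IH].
- by rewrite GRing.addr0 mulg1.
- have -> : Posz n.+1 = (Posz n + 1)%R by lia.
  by rewrite GRing.addrA !expgzS IH mulgA.
have shift k : expgz x (k - 1)%R = expgz x k * x^-1.
  by rewrite -[in RHS](GRing.subrK 1%R k) expgzS mulgK.
rewrite (_ : (- Posz n.+1)%R = (- Posz n - 1)%R); last by lia.
by rewrite GRing.addrA !shift IH mulgA.
Qed.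

Lemma expgzN x k : expgz x (- k)%R = (expgz x k)^-1.
Proof. by apply/esym/mulg1_eq; rewrite -expgzD GRing.subrr. Qed.

Lemma expgzM x m n : expgz x (m * n)%R = expgz (expgz x m) n.
Proof.
elim/int_rect: n => [|n IH|n IH].
- by rewrite GRing.mulr0.
- have -> : Posz n.+1 = (Posz n + 1)%R by lia.
  by rewrite GRing.mulrDr GRing.mulr1 !expgzD IH.
rewrite (_ : (- Posz n.+1)%R = (- Posz n - 1)%R); last by lia.
by rewrite GRing.mulrDr GRing.mulrN1 !expgzD IH !expgzN.
Qed.

Lemma expgz1n k : expgz 1 k = 1.
Proof. by case: k => n /=; rewrite expg1n ?invg1. Qed.

Lemma expVgz x k : expgz x^-1 k = (expgz x k)^-1.
Proof. by case: k => n /=; rewrite expVgn. Qed.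

Lemma conjXzg x y k : (expgz x k) ^ y = expgz (x ^ y) k.
Proof. by case: k => n /=; rewrite ?conjVg conjXg. Qed.

Lemma commuteXz x y k : commute x y -> commute x (expgz y k).
Proof. by case: k => n cxy /=; [apply: commuteX | apply/commuteV/commuteX]. Qed.

Lemma commuteXz2 x y i j : commute x y -> commute (expgz x i) (expgz y j).
Proof. by move=> cxy; apply/commute_sym/commuteXz/commute_sym/commuteXz. Qed.

Lemma expgzMn x y k : commute x y -> expgz (x * y) k = expgz x k * expgz y k.
Proof.
case: k => n cxy /=; rewrite expgMn //.
by rewrite invgM; apply/commuteV/commute_sym/commuteV/commute_sym/commuteX2.
Qed.

Lemma expgz_eq1 x k : (expgz x k == 1) = (x ^+ `|k|%N == 1).
Proof. by case: k => n //=; rewrite invg_eq1. Qed.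

Lemma expgn_gcd_eq1 x m n : x ^+ m = 1 -> x ^+ n = 1 -> x ^+ gcdn m n = 1.
Proof.
move=> xm1 xn1; have [->|m_gt0] := posnP m; first by rewrite gcd0n.
have [km kn def_km _] := egcdnP n m_gt0.
have : x ^+ (km * m) = 1 by rewrite mulnC expgnA xm1 expg1n.
by rewrite def_km expgnDr mulnC expgnA xn1 expg1n mul1g.
Qed.

Lemma expgz_sqr_eq1_prime q x j :
  prime q -> x ^+ q = 1 -> expgz x (j * j)%R = 1 -> expgz x j = 1.
Proof.
move=> q_pr xq1 /eqP; rewrite expgz_eq1 abszM => /eqP xjj1.
apply/eqP; rewrite expgz_eq1; apply/eqP.
have [/dvdnP[k ->]|q_ndvd] := boolP (q %| `|j|).
  by rewrite mulnC expgnA xq1 expg1n.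
have q_cop : coprime q (`|j| * `|j|) by rewrite coprimeMr prime_coprime // q_ndvd.
by have := expgn_gcd_eq1 xq1 xjj1; rewrite (eqP q_cop) expg1 => ->; rewrite expg1n.
Qed.

Lemma commuteMKl x y z : commute x y -> commute x (y * z) -> commute x z.
Proof. by move=> cxy cxyz; rewrite -(mulKg y z); apply/commuteM/cxyz/commuteV. Qed.

Lemma commuteJ x y g : commute x y -> commute (x ^ g) (y ^ g).
Proof. by rewrite /commute -!conjMg => ->. Qed.

Lemma commgXz b c k :
  commute [~ b, c] c -> [~ b, expgz c k] = expgz [~ b, c] k.
Proof.
move=> cyc; have cb : c ^ b = c * [~ b, c]^-1 by rewrite invgR commgEl mulVKg.
rewrite commgEr conjVg conjXzg cb expgzMn; last exact: commuteV (commute_sym cyc).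
by rewrite invgM mulgVK expVgz invgK.
Qed.

Lemma commXzg b c k :
  commute [~ c, b] c -> [~ expgz c k, b] = expgz [~ c, b] k.
Proof.
move=> cyc; rewrite -invgR commgXz; first by rewrite -expVgz invgR.
by rewrite -invgR; apply/commute_sym/commuteV/commute_sym.
Qed.

End IntegerPowers.

Section Subgroups.
Variable gT : groupType.
Implicit Types (S N Gr X : gset gT) (x y c g : gT).

Section Closure.
Variable S : gset gT.
Hypothesis sS : subgroup S.

Lemma subgroup1 : S 1. Proof. by case: sS. Qed.
Lemma subgroupM x y : S x -> S y -> S (x * y).
Proof. by case: sS => _ [SM _]; apply: SM. Qed.
Lemma subgroupV x : S x -> S x^-1.
Proof. by case: sS => _ [_ SV]; apply: SV. Qed.

Lemma subgroupX x n : S x -> S (x ^+ n).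
Proof.
by move=> Sx; elim: n => [|n IH]; [exact: subgroup1 | rewrite expgS; apply: subgroupM].
Qed.

Lemma subgroupXz x k : S x -> S (expgz x k).
Proof. by case: k => n Sx /=; [|apply: subgroupV]; apply: subgroupX. Qed.

Lemma subgroupJ x y : S x -> S y -> S (x ^ y).
Proof. by move=> Sx Sy; do !apply: subgroupM => //; apply: subgroupV. Qed.

Lemma subgroupR x y : S x -> S y -> S [~ x, y].
Proof. by move=> Sx Sy; apply: subgroupM; [apply: subgroupV | apply: subgroupJ]. Qed.

End Closure.

Lemma subgroup_trivial : subgroup (fun x : gT => x = 1).
Proof. by split=> //; split=> [x y -> ->|x ->]; rewrite ?mulg1 ?invg1. Qed.

Lemma subgroup_centralizer c : subgroup (commute c).
Proof.
by split; [exact: commute1 | split=> [x y|x]; [apply: commuteM | apply: commuteV]].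
Qed.

Lemma subgroup_expgz2 x y : commute x y ->
  subgroup (fun z => exists i j, z = expgz x i * expgz y j).
Proof.
move=> cxy; split; first by exists 0%R, 0%R; rewrite mulg1.
split=> [_ _ [i [j ->]] [i' [j' ->]] | _ [i [j ->]]].
  exists (i + i')%R, (j + j')%R; rewrite !expgzD !mulgA; congr (_ * _).
  by rewrite -!mulgA; congr (_ * _); apply/commuteXz2/commute_sym.
exists (- i)%R, (- j)%R; rewrite !expgzN invgM.
by apply/commute_sym/commuteV/commute_sym/commuteV/commuteXz2.
Qed.

Lemma generated_mem X S x : set_eq X (generated S) -> S x -> X x.
Proof. by move=> defX Sx; apply/defX => K _; apply. Qed.

Lemma generated_min X S K :
  set_eq X (generated S) -> subgroup K -> Defs.subset S K -> Defs.subset X K.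
Proof. by move=> defX sK sSK x /defX; apply. Qed.

Lemma mem_generated2 X x y z : commute x y ->
  (forall K, subgroup K -> K x -> K y -> Defs.subset X K) ->
  X z -> exists i j, z = expgz x i * expgz y j.
Proof.
move=> cxy minX; apply: (minX (fun z => exists i j, z = expgz x i * expgz y j)).
- exact: subgroup_expgz2.
- by exists 1%R, 0%R; rewrite mulg1.
- by exists 0%R, 1%R; rewrite mul1g.
Qed.

Lemma normal_commg_mem N M Gr x y :
  normal_in N Gr -> normal_in M Gr -> N x -> M y -> N [~ x, y] /\ M [~ x, y].
Proof.
move=> [sN [sG [sNG nNG]]] [sM [_ [sMG nMG]]] Nx My; split.
  by rewrite commgEl; apply: subgroupM (subgroupV sN Nx) (nNG _ _ (sMG _ My) Nx).
by rewrite commgEr; apply: subgroupM (nMG _ _ (sNG _ Nx) (subgroupV sM My)) My.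
Qed.

Lemma normal_central_commg N Gr c g h :
  normal_in N Gr -> Gr g -> (forall n, N n -> commute c n) -> N h ->
  commute h [~ c, g].
Proof.
move=> [_ [sG [_ nNG]]] Gg cN Nh.
have cgh : commute (c ^ g) h.
  have Nhg : N (h ^ g^-1) by apply: nNG => //; apply: subgroupV.
  by rewrite -(conjgKV g h) /commute -!conjMg cN.
by rewrite commgEl; apply: commuteM; [apply/commuteV/commute_sym/cN | apply: commute_sym].
Qed.

End Subgroups.

Section Homomorphisms.
Variables (gT : groupType) (H : gset gT) (f : gT -> gT).
Hypotheses (sH : subgroup H) (fM : hom_on H f).
Implicit Types x y : gT.

Lemma hom_on1 : f 1 = 1.
Proof.
have := fM (subgroup1 sH) (subgroup1 sH); rewrite mulg1 => f1.
by apply: (mulgI (f 1)); rewrite -f1 mulg1.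
Qed.

Lemma hom_onV x : H x -> f x^-1 = (f x)^-1.
Proof.
move=> Hx; apply/esym/mulg1_eq.
by rewrite -fM ?mulgV ?hom_on1 //; apply: subgroupV.
Qed.

Lemma hom_onX x n : H x -> f (x ^+ n) = f x ^+ n.
Proof.
move=> Hx; elim: n => [|n IH]; first exact: hom_on1.
by rewrite !expgS fM ?IH //; apply: subgroupX.
Qed.

Lemma hom_onXz x k : H x -> f (expgz x k) = expgz (f x) k.
Proof. by case: k => n Hx /=; rewrite ?hom_onV ?hom_onX //; apply: subgroupX. Qed.

Lemma hom_onR x y : H x -> H y -> f [~ x, y] = [~ f x, f y].
Proof.
move=> Hx Hy; rewrite /commg /conjg !fM ?hom_onV //.
all: by do ?[apply: (subgroupM sH) | apply: (subgroupV sH)].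
Qed.

Lemma hom_on_commute x y : H x -> H y -> commute x y -> commute (f x) (f y).
Proof. by move=> Hx Hy cxy; rewrite /commute -!fM // cxy. Qed.

Lemma injective_on_eq1 x : injective_on H f -> H x -> f x = 1 -> x = 1.
Proof. by move=> f_inj Hx fx1; apply: f_inj; rewrite ?hom_on1 //; apply: subgroup1. Qed.

End Homomorphisms.

Lemma quot_cyclic_expgz_sqr (gT : groupType) p (Gr N : gset gT) x j :
  prime_or_inf p -> subgroup N -> trivial_set N -> quot_cyclic_of_order p Gr N ->
  Gr x -> expgz x (j * j)%R = 1 -> expgz x j = 1.
Proof.
move=> p_ok sN N1 [g [[_ genG] g_ord]] Gx.
have [e ->] : exists e, x = expgz g e.
  have [m [/N1 gmx1|/N1 gmx1]] := genG x Gx.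
    by exists m; rewrite -(mulg1_eq gmx1) invgK.
  by exists (- Posz m)%R; rewrite expgzN -(mulg1_eq gmx1).
case: p p_ok g_ord => [q q_pr [Ngq _] | _ g_inf].
  apply: expgz_sqr_eq1_prime q_pr _.
  by rewrite -[_ ^+ q]/(expgz _ q) -expgzM GRing.mulrC expgzM /= (N1 _ Ngq) expgz1n.
rewrite -!expgzM; have [-> //|ej_neq0] := eqVneq (e * j)%R 0%R.
move/eqP; rewrite expgz_eq1 => /eqP gejj1; case: (g_inf `|(e * (j * j))%R|).
  by move: ej_neq0; rewrite -absz_eq0 !abszM -lt0n mulnA !muln_gt0 => /andP[-> ->].
by rewrite gejj1; apply: subgroup1.
Qed.

Section SSPLengthFive.
Variables (gT : groupType) (p : option nat) (G H : gset gT) (f : gT -> gT).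
Variable a : nat -> gT.
Hypotheses (ssp : SSP p G H f) (basis : canonical_basis G H f 5 a).
Local Unset Implicit Arguments.

Local Notation G_ k := (Gk G H f k).
Local Notation H_ k := (Hk G H f k).

Let sH : subgroup H.
Proof. by case: ssp => _ [_ [_ /(_ 0%N) [[[_ []]]]]]. Qed.

Let fM : hom_on H f.
Proof. by case: ssp => _ [_ [_ /(_ 0%N) [[[_ [_ [_ []]]]]]]]. Qed.

Let f_inj : injective_on H f.
Proof. by case: ssp => _ [_ []]. Qed.

Let normal_Hk k : normal_in (H_ k) (G_ k).
Proof. by case: ssp => _ [_ [_ /(_ k) [_ []]]]. Qed.

Let normal_Gk k : normal_in (G_ k.+1) (G_ k).
Proof. by case: ssp => _ [_ [_ /(_ k) [_ [_ []]]]]. Qed.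

Let Ha i : 0 < i < 5 -> H (a i).
Proof. by case: basis => Ha _; apply: Ha. Qed.

Let fa i : 0 < i < 5 -> f (a i) = a i.+1.
Proof. by case: basis => _ [fa _] i_ok; rewrite fa. Qed.

Let Gk_mem k j : k < j <= 5 -> G_ k (a j).
Proof.
move=> /andP[kj j5]; case: basis => _ [_ /(_ k) []]; first exact: leq_trans kj j5.
by move=> defG _; apply: generated_mem defG _; exists j; rewrite kj j5.
Qed.

Let Hk_mem k j : k < j <= 4 -> H_ k (a j).
Proof.
move=> /andP[kj j4]; case: basis => _ [_ /(_ k) []]; first exact: ltnW (leq_trans kj j4).
by move=> _ defH; apply: generated_mem defH _; exists j; rewrite kj j4.
Qed.

Let Gk_min k K : k <= 4 -> subgroup K -> (forall j, k < j <= 5 -> K (a j)) ->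
  Defs.subset (G_ k) K.
Proof.
move=> k4 sK Ka; case: basis => _ [_ /(_ k k4) [defG _]].
by apply: generated_min defG sK _ => _ [j [kj ->]]; apply: Ka.
Qed.

Let Hk_min k K : k <= 4 -> subgroup K -> (forall j, k < j <= 4 -> K (a j)) ->
  Defs.subset (H_ k) K.
Proof.
move=> k4 sK Ka; case: basis => _ [_ /(_ k k4) [_ defH]].
by apply: generated_min defH sK _ => _ [j [kj ->]]; apply: Ka.
Qed.

Let H4_trivial : trivial_set (H_ 4).
Proof.
move=> x; apply: (Hk_min 4 (fun x => x = 1)) => //; first exact: subgroup_trivial.
by move=> j /andP[j_gt4 j_le4]; have := leq_trans j_gt4 j_le4; rewrite ltnn.
Qed.

Let Hk_sub k x : H_ k x -> H x.
Proof. by case: k => // k []. Qed.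

Let commg_Hk k x y : H_ k x -> G_ k.+1 y -> H_ k.+1 [~ x, y].
Proof.
move=> Hx Gy; have [HR GR] := normal_commg_mem (normal_Hk k) (normal_Gk k) Hx Gy.
by split=> //; apply: Hk_sub HR.
Qed.

Let HXz i m : 0 < i < 5 -> H (expgz (a i) m).
Proof. by move=> i_ok; apply: (subgroupXz sH); apply: Ha. Qed.

Let HR i k : 0 < i < 5 -> 0 < k < 5 -> H [~ a i, a k].
Proof. by move=> i_ok k_ok; apply: (subgroupR sH); apply: Ha. Qed.

Let fXz i m : 0 < i < 5 -> f (expgz (a i) m) = expgz (a i.+1) m.
Proof. by move=> i_ok; rewrite (hom_onXz sH fM _ (Ha _ i_ok)) fa. Qed.

Let fR i k : 0 < i < 5 -> 0 < k < 5 -> f [~ a i, a k] = [~ a i.+1, a k.+1].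
Proof. by move=> i_ok k_ok; rewrite (hom_onR sH fM (Ha _ i_ok) (Ha _ k_ok)) !fa. Qed.

Let f_eq1 x : H x -> f x = 1 -> x = 1.
Proof. exact: (injective_on_eq1 sH fM f_inj). Qed.

Let commute_succ i k : 0 < i < 5 -> 0 < k < 5 ->
  commute (a i) (a k) -> commute (a i.+1) (a k.+1).
Proof. by move=> i_ok k_ok; rewrite -!fa //; apply: (hom_on_commute fM); apply: Ha. Qed.

Let expgz_succ_eq1 i m : 0 < i < 5 -> expgz (a i.+1) m = 1 <-> expgz (a i) m = 1.
Proof.
move=> i_ok; rewrite -fXz //; split=> [|->]; first by apply: f_eq1; apply: HXz.
exact: hom_on1 sH fM.
Qed.

Let expgz_basis_eq1 i k m : 0 < i <= 5 -> 0 < k <= 5 ->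
  expgz (a i) m = 1 -> expgz (a k) m = 1.
Proof.
have e4 := expgz_succ_eq1 4 m isT; have e3 := expgz_succ_eq1 3 m isT.
have e2 := expgz_succ_eq1 2 m isT; have e1 := expgz_succ_eq1 1 m isT.
move: i k => [|[|[|[|[|[|i]]]]]] [|[|[|[|[|[|k]]]]]] //= _ _.
all: by rewrite ?e4 ?e3 ?e2 ?e1.
Qed.

Let expgz_a5_sqr j : expgz (a 5) (j * j)%R = 1 -> expgz (a 5) j = 1.
Proof.
have [->|a5_neq1] := eqVneq (a 5) 1; first by rewrite !expgz1n.
case: ssp => p_ok [_ [_ /(_ 4%N) [_ [[sH4 _] [_ [_ quot4]]]]]].
have G4a5 : G_ 4 (a 5) by apply: Gk_mem.
apply: (quot_cyclic_expgz_sqr p_ok sH4 H4_trivial _ G4a5).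
by apply: quot4 => G4_triv; rewrite (G4_triv _ G4a5) eqxx in a5_neq1.
Qed.

Let expgz_basis_sqr i k j : 0 < i <= 5 -> 0 < k <= 5 ->
  expgz (a i) (j * j)%R = 1 -> expgz (a k) j = 1.
Proof.
move=> i_ok k_ok aijj; apply: (expgz_basis_eq1 5) => //.
by apply: expgz_a5_sqr; apply: expgz_basis_eq1 aijj.
Qed.

Let fXz2 i k m n : 0 < i < 5 -> 0 < k < 5 ->
  f (expgz (a i) m * expgz (a k) n) = expgz (a i.+1) m * expgz (a k.+1) n.
Proof. by move=> i_ok k_ok; rewrite fM ?fXz //; apply: HXz. Qed.

Let H3_expgz x : H_ 3 x -> exists j, x = expgz (a 4) j.
Proof.
move=> H3x; have [i [j ->]] : exists i j, x = expgz (a 4) i * expgz 1 j.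
  apply: mem_generated2 (commute1 _) _ H3x => K sK Ka4 _.
  by apply: (Hk_min 3 K isT sK) => -[|[|[|[|[|j]]]]].
by exists i; rewrite expgz1n mulg1.
Qed.

Let H2_expgz x : commute (a 3) (a 4) -> H_ 2 x ->
  exists s t, x = expgz (a 3) s * expgz (a 4) t.
Proof.
move=> c34 H2x; apply: mem_generated2 c34 _ H2x => K sK Ka3 Ka4.
by apply: (Hk_min 2 K isT sK) => -[|[|[|[|[|j]]]]].
Qed.

Lemma commg13_eq1 : commute (a 1) (a 2) -> [~ a 1, a 3] = 1.
Proof.
move=> c12; have c23 : commute (a 2) (a 3) by apply: commute_succ.
have c34 : commute (a 3) (a 4) by apply: commute_succ.
have [j z_eq] : exists j, [~ a 3, a 5] = expgz (a 4) j.
  by apply/H3_expgz/commg_Hk; [apply: Hk_mem | apply: Gk_mem].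
have y_eq : [~ a 2, a 4] = expgz (a 3) j.
  by apply: f_inj; [apply: HR | apply: HXz | rewrite fR // fXz].
have a3_central : forall h, H_ 1 h -> commute (a 3) h.
  by apply: (Hk_min 1 _ isT (subgroup_centralizer (a 3))) => -[|[|[|[|[|i]]]]].
have a2z : commute (a 2) [~ a 3, a 5].
  apply: (normal_central_commg (normal_Hk 1) _ a3_central).
    exact: Gk_mem.
  exact: Hk_mem.
have a3jj : expgz (a 3) (j * j)%R = 1.
  rewrite expgzM -y_eq -commgXz; first by apply/eqP/commgP; rewrite -z_eq.
  by rewrite y_eq; apply/commute_sym/commuteXz/commute_sym.
have a4j : expgz (a 4) j = 1 := expgz_basis_sqr 3 4 j isT isT a3jj.
apply: f_eq1; first exact: HR.
by rewrite fR // y_eq; apply: (expgz_basis_eq1 4).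
Qed.

Lemma commg14_eq1 :
  commute (a 1) (a 2) -> commute (a 1) (a 3) -> [~ a 1, a 4] = 1.
Proof.
move=> c12 c13; have c23 : commute (a 2) (a 3) by apply: commute_succ.
have c34 : commute (a 3) (a 4) by apply: commute_succ.
have c45 : commute (a 4) (a 5) by apply: commute_succ.
have c24 : commute (a 2) (a 4) by apply: commute_succ.
have [s [t w_eq]] : exists s t, [~ a 2, a 5] = expgz (a 3) s * expgz (a 4) t.
  by apply/H2_expgz/commg_Hk; [|apply: Hk_mem | apply: Gk_mem].
have v_eq : [~ a 1, a 4] = expgz (a 2) s * expgz (a 3) t.
  apply: f_inj; [by apply: HR | | by rewrite fR // fXz2].
  by apply: (subgroupM sH); apply: HXz.
have a2_central : forall h, H_ 0 h -> commute (a 2) h.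
  by apply: (Hk_min 0 _ isT (subgroup_centralizer (a 2))) => -[|[|[|[|[|i]]]]].
have a1w : commute (a 1) [~ a 2, a 5].
  apply: (normal_central_commg (normal_Hk 0) _ a2_central).
    exact: Gk_mem.
  exact: Hk_mem.
have a1a4t : commute (a 1) (expgz (a 4) t).
  apply: (commuteMKl (y := expgz (a 3) s)); first exact: commuteXz.
  by rewrite -w_eq.
have vt : expgz (a 2) (s * t)%R * expgz (a 3) (t * t)%R = 1.
  rewrite !expgzM -expgzMn; last exact: commuteXz2.
  rewrite -v_eq -commgXz; first exact/eqP/commgP.
  by rewrite v_eq; apply/commute_sym/commuteM; apply/commuteXz/commute_sym.
have a5tt : expgz (a 5) (t * t)%R = 1.
  have e5 : expgz (a 4) (s * t)%R * expgz (a 5) (t * t)%R = 1.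
    by rewrite -fXz2 // -fXz2 // vt !(hom_on1 sH fM).
  apply: H4_trivial; split.
    by rewrite -(mulg1_eq e5); apply: subgroupV sH _ (HXz 4 _ isT).
  by apply: subgroupXz (normal_Gk 3).1 _ _ (Gk_mem 4 5 isT).
rewrite (expgz_basis_sqr 5 4 t isT isT a5tt) mulg1 in w_eq.
rewrite (expgz_basis_sqr 5 3 t isT isT a5tt) mulg1 in v_eq.
have a4_central : forall h, G_ 1 h -> commute (a 4) h.
  by apply: (Gk_min 1 _ isT (subgroup_centralizer (a 4))) => -[|[|[|[|[|[|i]]]]]].
have a5v : commute (a 5) [~ a 1, a 4].
  (* Conjugate by a 1: a 5 ^ a 1 stays in G_1, where a 4 is central, while
     a 4 ^ a 1 = a 4 * [a 4, a 1]. *)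
  have G1_a5a1 : G_ 1 (a 5 ^ a 1).
    by case: (normal_Gk 0) => _ [_ [_ nG1]]; apply: nG1; apply: Gk_mem.
  have u4 := commute_sym (a4_central _ G1_a5a1).
  have u4R : commute (a 5 ^ a 1) (a 4 * [~ a 4, a 1]).
    by rewrite commgEl mulVKg; apply/commuteJ/commute_sym.
  have va1 : commute [~ a 1, a 4] (a 1)^-1.
    by rewrite v_eq; apply/commuteV/commute_sym/commuteXz.
  have := commuteJ (a 1)^-1 (commuteV (commuteMKl u4 u4R)).
  by rewrite invgR conjgK conjgE va1 mulKg.
have a3ss : expgz (a 3) (s * s)%R = 1.
  rewrite expgzM -w_eq -commXzg; first by rewrite -v_eq; apply/eqP/commgP/commute_sym.
  by rewrite w_eq; apply/commute_sym/commuteXz.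
apply: f_eq1; first exact: HR.
by rewrite fR // w_eq; apply: (expgz_basis_sqr 3 3).
Qed.

End SSPLengthFive.

Theorem mainTheorem10 (gT : groupType) (p : option nat) (G H : gset gT)
  (f : gT -> gT) (c : nat) :
  SSP p G H f -> ssp_length p G 5 -> of_Gnc_type G H f 5 c ->
  c = 4 \/ c = 5.
Proof.
move=> ssp _ [a [basis [c_range [c_comm c_max]]]].
have a1_comm s : 2 <= s <= c -> commute (a 1%N) (a s).
  by move=> s_range; apply/commgP/eqP/c_comm.
clear c_comm; move: c_range a1_comm c_max => /andP[].
case: c => [|[|[|[|[|[|c]]]]]] // _ _ a1_comm c_max.
- by case: c_max => //; apply: commg13_eq1 ssp basis _; apply: a1_comm.
- by case: c_max => //; apply: commg14_eq1 ssp basis _ _; apply: a1_comm.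
- by left.
- by right.
Qed.
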